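(* Let $\mathcal{M}_n$ be a sequence of closed subspaces of a Hilbert space $\mathcal{H}$ and let $\mathcal{M}$ be a subspace of $\mathcal{H}$. The following are equivalent: (i) $\mathcal{M}_n\to\mathcal{M}$; (ii) $P_{\mathcal{M}_n}P_{\mathcal{M}}\to P_{\mathcal{M}}$ in the strong operator topology, and there is no larger space $\mathcal{N}\supsetneq\mathcal{M}$ such that $P_{\mathcal{M}_n}P_{\mathcal{N}}\to P_{\mathcal{N}}$; (iii) $P_{\mathcal{M}_n}P_{\mathcal{M}}\to P_{\mathcal{M}}$ in the weak operator topology, and there is no larger space $\mathcal{N}\supsetneq\mathcal{M}$ such that $P_{\mathcal{M}_n}P_{\mathcal{N}}\to P_{\mathcal{N}}$.
   Context: For closed subspaces $\mathcal{M}_n$ of $\mathcal{H}$, $\mathcal{M}_n\to\mathcal{M}$ means $\mathcal{M}=\{f\in\mathcal{H}:\lim_n\operatorname{dist}(f,\mathcal{M}_n)=0\}$. $P_{\mathcal{K}}$ denotes the orthogonal projection onto a closed subspace $\mathcal{K}$. *)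

From HB Require Import structures.
From mathcomp Require Import all_boot all_order all_algebra.
From mathcomp Require Import reals.
From mathcomp.real_closed Require Import complex.
From Stdlib Require Import ClassicalEpsilon.
Set Implicit Arguments. Unset Strict Implicit. Unset Printing Implicit Defensive.
Import Order.TTheory GRing.Theory Num.Theory.
Local Open Scope ring_scope.

Section Hilbert.
Variable R : realType.
Notation C := (R[i])%C.

Record inner_product (V : lmodType C) := InnerProduct {
  ip :> V -> V -> C;
  ip_linear : forall (a : C) (x y z : V), ip (a *: x + y) z = a * ip x z + ip y z;
  ip_conj : forall x y : V, ip y x = (ip x y)^*;
  ip_ge0 : forall x : V, 0 <= ip x x;
  ip_eq0 : forall x : V, ip x x = 0 -> x = 0
}.

Variables (V : lmodType C) (ip : inner_product V).

Definition hnorm (x : V) : C := sqrtC (ip x x).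

Definition hconv (u : nat -> V) (l : V) : Prop :=
  forall e : C, 0 < e -> exists N, forall n, (N <= n)%N -> hnorm (u n - l) < e.

Definition sconv (u : nat -> C) (l : C) : Prop :=
  forall e : C, 0 < e -> exists N, forall n, (N <= n)%N -> `|u n - l| < e.

Definition hcauchy (u : nat -> V) : Prop :=
  forall e : C, 0 < e -> exists N, forall m n, (N <= m)%N -> (N <= n)%N ->
    hnorm (u m - u n) < e.

Definition complete_ip : Prop :=
  forall u : nat -> V, hcauchy u -> exists l, hconv u l.

Definition subspace (M : V -> Prop) : Prop :=
  M 0 /\ (forall (a : C) x y, M x -> M y -> M (a *: x + y)).

Definition closed_subspace (M : V -> Prop) : Prop :=
  subspace M /\ (forall u l, (forall n, M (u n)) -> hconv u l -> M l).

(* orthogonal projection P_M x: the (unique, for closed M in a Hilbert space)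
   p in M with x - p orthogonal to M *)
Definition proj (M : V -> Prop) (x : V) : V :=
  epsilon (inhabits (0 : V))
    (fun p => M p /\ forall y, M y -> ip (x - p) y = 0).

(* dist(f, M_n) -> 0, written out: for every e > 0, eventually
   inf_{g in M_n} ||f - g|| < e *)
Definition dist_to0 (Ms : nat -> V -> Prop) (f : V) : Prop :=
  forall e : C, 0 < e -> exists N, forall n, (N <= n)%N ->
    exists g, Ms n g /\ hnorm (f - g) < e.

Definition subspace_lim (Ms : nat -> V -> Prop) (M : V -> Prop) : Prop :=
  forall f, M f <-> dist_to0 Ms f.

Definition sot_conv (A : nat -> V -> V) (B : V -> V) : Prop :=
  forall x, hconv (fun n => A n x) (B x).

Definition wot_conv (A : nat -> V -> V) (B : V -> V) : Prop :=
  forall x y, sconv (fun n => ip (A n x) y) (ip (B x) y).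

Definition strict_sub (M N : V -> Prop) : Prop :=
  (forall x, M x -> N x) /\ exists x, N x /\ ~ M x.

End Hilbert.

From HB Require Import structures.
From mathcomp Require Import all_boot all_order all_algebra.
From mathcomp Require Import boolp classical_sets reals.
From mathcomp.real_closed Require Import complex.
From mathcomp Require Import lra ring.
From Stdlib Require Import ClassicalEpsilon.
Import Order.TTheory GRing.Theory Num.Theory Normc.
Local Open Scope ring_scope.

(* Let L be the set of vectors f with dist(f, M_n) -> 0.  It is a closed
   subspace, and M_n -> M says exactly that M = L.  For a closed subspace N,
   P_{M_n} P_N -> P_N holds strongly iff it holds weakly iff N is contained in
   L: for f in N, ||P_{M_n} f - f|| = dist(f, M_n) by the best approximation
   property, and ||f - P_{M_n} f||^2 = <f, f> - <P_{M_n} f, f>, so already weak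
   convergence at f forces dist(f, M_n) -> 0.  Hence M_n -> M iff M is
   contained in L and no closed N strictly containing M is, L itself being
   the witness when M is smaller than L.  Orthogonal projections exist by the
   classical argument: a minimising sequence for dist(x, N) is Cauchy by the
   parallelogram law, and its limit is orthogonal to N by minimality. *)

Section InnerProductSpace.
Variable R : realType.
Local Notation C := R[i].
Local Notation "x %:C" := (real_complex R x) : ring_scope.
Local Notation Re := (@complex.Re R).
Variables (V : lmodType C) (ip : inner_product V).

Lemma ipDl x y z : ip (x + y) z = ip x z + ip y z.
Proof. by rewrite -[x in LHS]scale1r ip_linear mul1r. Qed.

Lemma ip0l z : ip 0 z = 0.
Proof. by apply: (addrI (ip 0 z)); rewrite -ipDl !addr0. Qed.

Lemma ipZl a x z : ip (a *: x) z = a * ip x z.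
Proof. by rewrite -[a *: x]addr0 ip_linear ip0l addr0. Qed.

Lemma ipNl x z : ip (- x) z = - ip x z.
Proof. by rewrite -scaleN1r ipZl mulN1r. Qed.

Lemma ipBl x y z : ip (x - y) z = ip x z - ip y z.
Proof. by rewrite ipDl ipNl. Qed.

Lemma ipDr x y z : ip x (y + z) = ip x y + ip x z.
Proof. by rewrite ip_conj ipDl rmorphD /= -!ip_conj. Qed.

Lemma ipZr a x z : ip x (a *: z) = a^* * ip x z.
Proof. by rewrite ip_conj ipZl rmorphM /= -ip_conj. Qed.

Lemma ip0r x : ip x 0 = 0.
Proof. by rewrite ip_conj ip0l rmorph0. Qed.

Lemma ipNr x z : ip x (- z) = - ip x z.
Proof. by rewrite -scaleN1r ipZr rmorphN1 mulN1r. Qed.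

Lemma ipBr x y z : ip x (y - z) = ip x y - ip x z.
Proof. by rewrite ipDr ipNr. Qed.

Definition vnorm2 (x : V) : R := Re (ip x x).
Definition vnorm (x : V) : R := Num.sqrt (vnorm2 x).

Lemma ipxx x : ip x x = (vnorm2 x)%:C.
Proof. by rewrite RRe_real // ger0_real // ip_ge0. Qed.

Lemma vnorm2_ge0 x : 0 <= vnorm2 x.
Proof. by rewrite -ler0c -ipxx ip_ge0. Qed.

Lemma vnorm2_eq0 x : vnorm2 x = 0 -> x = 0.
Proof. by move=> x0; apply: (ip_eq0 (i:=ip)); rewrite ipxx x0. Qed.

Lemma vnorm2_le0 x : vnorm2 x <= 0 -> x = 0.
Proof. by move=> x_le0; apply/vnorm2_eq0/le_anti; rewrite x_le0 vnorm2_ge0. Qed.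

Lemma vnorm_ge0 x : 0 <= vnorm x.
Proof. exact: sqrtr_ge0. Qed.

Lemma sqr_vnorm x : vnorm x ^+ 2 = vnorm2 x.
Proof. by rewrite sqr_sqrtr // vnorm2_ge0. Qed.

Lemma hnormE x : hnorm ip x = (vnorm x)%:C.
Proof.
rewrite /hnorm ipxx -[vnorm2 x in LHS]sqr_vnorm rmorphXn sqrCK //.
by rewrite ler0c vnorm_ge0.
Qed.

Lemma normcR (c : C) : `|c| = (normc c)%:C.
Proof. by case: c. Qed.

Lemma sqr_normc (c : C) : (normc c ^+ 2)%:C = c * c^*.
Proof. by rewrite -normCK normcR rmorphXn. Qed.

Lemma normc_ge0 (c : C) : 0 <= normc c.
Proof. by case: c => a b; exact: sqrtr_ge0. Qed.

Lemma normc_real (a : R) : normc a%:C = `|a|.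
Proof. by rewrite /= expr0n addr0 sqrtr_sqr. Qed.

Lemma Re_le_normc (c : C) : Re c <= normc c.
Proof.
rewrite -lecR -normcR; apply: le_trans (normc_ge_Re c).
by rewrite lecR ler_norm.
Qed.

Lemma vnorm2D x y : vnorm2 (x + y) = vnorm2 x + vnorm2 y + 2 * Re (ip x y).
Proof.
apply: complexI; rewrite !rmorphD rmorphM /= rmorph_nat -addcJ -!ipxx.
by rewrite ipDl !ipDr [ip y x]ip_conj; ring.
Qed.

Lemma vnorm2N x : vnorm2 (- x) = vnorm2 x.
Proof. by rewrite /vnorm2 ipNl ipNr opprK. Qed.

Lemma vnorm2B x y : vnorm2 (x - y) = vnorm2 x + vnorm2 y - 2 * Re (ip x y).
Proof. by rewrite vnorm2D vnorm2N ipNr raddfN mulrN. Qed.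

Lemma vnorm2Z a x : vnorm2 (a *: x) = normc a ^+ 2 * vnorm2 x.
Proof. by apply: complexI; rewrite rmorphM /= sqr_normc -!ipxx ipZl ipZr; ring. Qed.

Lemma vnormZ a x : vnorm (a *: x) = normc a * vnorm x.
Proof.
by rewrite /vnorm vnorm2Z sqrtrM ?sqr_ge0 // sqrtr_sqr ger0_norm // normc_ge0.
Qed.

Lemma vnorm0 : vnorm 0 = 0.
Proof. by rewrite /vnorm /vnorm2 ip0l sqrtr0. Qed.

Lemma vnormN x : vnorm (- x) = vnorm x.
Proof. by rewrite /vnorm vnorm2N. Qed.

Lemma vnormB x y : vnorm (x - y) = vnorm (y - x).
Proof. by rewrite -vnormN opprB. Qed.

Lemma vnorm2_sub_line z y : 0 < vnorm2 y ->
  vnorm2 (z - (ip z y / (vnorm2 y)%:C) *: y) =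
  vnorm2 z - normc (ip z y) ^+ 2 / vnorm2 y.
Proof.
move=> y0; apply: complexI.
rewrite rmorphB rmorphM fmorphV /= sqr_normc -!ipxx.
rewrite ipBl !ipBr !ipZl !ipZr [ip y z]ip_conj rmorphM fmorphV /= -[(ip y y)^*]ip_conj.
have : ip y y != 0 by rewrite ipxx fmorph_eq0 gt_eqF.
by move: (ip z y) (ip y y) => c d d0; field.
Qed.

Lemma cauchy_schwarz x y : normc (ip x y) <= vnorm x * vnorm y.
Proof.
have [y0|/vnorm2_le0 ->] := ltrP 0 (vnorm2 y); last first.
  by rewrite ip0r -(rmorph0 (real_complex R)) normc_real normr0 mulr_ge0 ?vnorm_ge0.
rewrite -ler_sqr ?nnegrE ?normc_ge0 ?mulr_ge0 ?vnorm_ge0 //.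
have := vnorm2_ge0 (x - (ip x y / (vnorm2 y)%:C) *: y).
by rewrite vnorm2_sub_line // subr_ge0 ler_pdivrMr // exprMn !sqr_vnorm.
Qed.

Lemma vnormD x y : vnorm (x + y) <= vnorm x + vnorm y.
Proof.
rewrite -ler_sqr ?nnegrE ?addr_ge0 ?vnorm_ge0 // sqrrD !sqr_vnorm vnorm2D.
have := le_trans (Re_le_normc (ip x y)) (cauchy_schwarz x y); lra.
Qed.

(* The order of [C] is partial: [0 < e] forces [e] to be real. *)
Lemma forall_posC (P : C -> Prop) :
  (forall e : C, 0 < e -> P e) <-> (forall r : R, 0 < r -> P r%:C).
Proof.
split=> [h r r0 | h e e0]; first by apply: h; rewrite ltcR.
have e_real : e \is Num.real by rewrite realE ltW.
by rewrite -(RRe_real e_real); apply: h; rewrite -ltcR RRe_real.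
Qed.

Lemma hconvR u l : hconv ip u l <->
  forall r : R, 0 < r -> exists N, forall n, (N <= n)%N -> vnorm (u n - l) < r.
Proof.
apply: iff_trans (forall_posC _) _.
by split=> h r /h [N HN]; exists N => n /HN; rewrite hnormE ltcR.
Qed.

Lemma hcauchyR u : hcauchy ip u <->
  forall r : R, 0 < r -> exists N, forall m n, (N <= m)%N -> (N <= n)%N ->
    vnorm (u m - u n) < r.
Proof.
apply: iff_trans (forall_posC _) _.
by split=> h r /h [N HN]; exists N => m n hm /(HN m n hm); rewrite hnormE ltcR.
Qed.

Lemma sconvR u l : sconv u l <->
  forall r : R, 0 < r -> exists N, forall n, (N <= n)%N -> normc (u n - l) < r.
Proof.
apply: iff_trans (forall_posC _) _.
by split=> h r /h [N HN]; exists N => n /HN; rewrite normcR ltcR.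
Qed.

Lemma dist_to0R Ms f : dist_to0 ip Ms f <->
  forall r : R, 0 < r -> exists N, forall n, (N <= n)%N ->
    exists g, Ms n g /\ vnorm (f - g) < r.
Proof.
apply: iff_trans (forall_posC _) _.
by split=> h r /h [N HN]; exists N => n /HN [g [Msg fg]];
  exists g; split=> //; move: fg; rewrite hnormE ltcR.
Qed.

Lemma invS_lt (e : R) : 0 < e ->
  exists N, forall n, (N <= n)%N -> (n.+1%:R)^-1 < e.
Proof.
move=> e0; exists (Num.bound e^-1) => n Nn.
rewrite invf_plt ?posrE ?ltr0Sn //; apply: lt_le_trans (archi_boundP _) _.
  by rewrite invr_ge0 ltW.
by rewrite ler_nat (leq_trans Nn).
Qed.

Lemma parallelogram x y :
  vnorm2 (x + y) + vnorm2 (x - y) = 2 * vnorm2 x + 2 * vnorm2 y.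
Proof. by rewrite vnorm2D vnorm2B; lra. Qed.

Section Subspace.
Variable N : V -> Prop.
Hypothesis subN : subspace N.

Lemma subspaceD {a b : V} : N a -> N b -> N (a + b).
Proof. by move=> Na Nb; rewrite -[a]scale1r; apply: subN.2. Qed.

Lemma subspaceZ c {a : V} : N a -> N (c *: a).
Proof. by move=> Na; rewrite -[_ *: _]addr0; apply: subN.2 => //; exact: subN.1. Qed.

Lemma subspaceB {a b : V} : N a -> N b -> N (a - b).
Proof. by move=> Na Nb; rewrite -scaleN1r; apply: subspaceD => //; apply: subspaceZ. Qed.

Lemma minimizing_seq_cauchy x (D : R) (g : nat -> V) :
  (forall y, N y -> D <= vnorm2 (x - y)) -> (forall k, N (g k)) ->
  (forall k, vnorm2 (x - g k) < D + (k.+1%:R)^-1) -> hcauchy ip g.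
Proof.
move=> D_le Ng gD.
have gap k m : vnorm2 (g m - g k) <= 2 * (k.+1%:R)^-1 + 2 * (m.+1%:R)^-1.
  pose w := x - 2^-1 *: (g k + g m).
  have Dw : D <= vnorm2 w by apply/D_le/subspaceZ/subspaceD.
  have -> : g m - g k = (x - g k) - (x - g m) by rewrite [RHS]addrC opprB addrA subrK.
  have half : (2^-1 + 2^-1 : C) = 1 by field.
  have sum_mid : (x - g k) + (x - g m) = w + w.
    by rewrite addrACA -opprD [RHS]addrACA -opprD -scalerDl half scale1r.
  have ww : vnorm2 (w + w) = 4 * vnorm2 w by rewrite vnorm2D -/(vnorm2 w); lra.
  have := parallelogram (x - g k) (x - g m); rewrite sum_mid ww.
  have := gD k; have := gD m; move: (k.+1%:R^-1 : R) (m.+1%:R^-1 : R) => ek em; lra.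
apply/hcauchyR => r r0.
have [K HK] := invS_lt _ (divr_gt0 (mulr_gt0 r0 r0) (ltr0Sn R 3)).
exists K => m n Km Kn; rewrite -ltr_sqr ?nnegrE ?vnorm_ge0 ?ltW // sqr_vnorm.
have := gap n m; have := HK m Km; have := HK n Kn; rewrite expr2.
by move: (n.+1%:R^-1 : R) (m.+1%:R^-1 : R) => en em; lra.
Qed.

Lemma min_dist_orthogonal x p : N p ->
  (forall y, N y -> vnorm2 (x - p) <= vnorm2 (x - y)) ->
  forall y, N y -> ip (x - p) y = 0.
Proof.
move=> Np p_min y Ny.
have [y0|/vnorm2_le0 -> //] := ltrP 0 (vnorm2 y); last exact: ip0r.
pose t := ip (x - p) y / (vnorm2 y)%:C.
have := p_min (p + t *: y) (subspaceD Np (subspaceZ t Ny)).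
rewrite opprD addrA vnorm2_sub_line // lerBDr gerDl ler_pdivrMr // mul0r => c_le0.
by apply/eq0_normc/eqP; rewrite -sqrf_eq0 eq_le c_le0 sqr_ge0.
Qed.

End Subspace.

Arguments subspaceB {N} subN {a b}.
Arguments minimizing_seq_cauchy {N} subN {x D g}.

Lemma vnorm2_le_of_cvg {x} {D : R} {g : nat -> V} {p} : 0 <= D -> hconv ip g p ->
  (forall k, vnorm2 (x - g k) < D + (k.+1%:R)^-1) -> vnorm2 (x - p) <= D.
Proof.
move=> D0 /hconvR gp gD.
rewrite -sqr_vnorm -(sqr_sqrtr D0) ler_sqr ?nnegrE ?vnorm_ge0 ?sqrtr_ge0 //.
apply/ler_addgt0Pr => e e0; have e2 : 0 < e / 2 by rewrite divr_gt0.
have [K1 HK1] := invS_lt _ (divr_gt0 (mulr_gt0 e0 e0) (ltr0Sn R 3)).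
have [K2 HK2] := gp _ e2.
pose k := maxn K1 K2.
have gk_near : vnorm (x - g k) < Num.sqrt D + e / 2.
  rewrite -ltr_sqr ?nnegrE ?vnorm_ge0 ?addr_ge0 ?sqrtr_ge0 ?ltW // sqr_vnorm.
  rewrite sqrrD sqr_sqrtr //.
  have := gD k; have := HK1 k (leq_maxl _ _); have : 0 <= Num.sqrt D * e.
    by rewrite mulr_ge0 ?sqrtr_ge0 ?ltW.
  by move: (k.+1%:R^-1 : R) => ek; lra.
have := vnormD (x - g k) (g k - p); rewrite addrA subrK.
by have := HK2 k (leq_maxr _ _); lra.
Qed.

Lemma proj_spec_ex N x : (exists p, N p /\ forall y, N y -> ip (x - p) y = 0) ->
  N (proj ip N x) /\ forall y, N y -> ip (x - proj ip N x) y = 0.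
Proof. by move=> p_ex; apply: (epsilon_spec _ _ p_ex). Qed.

Section Projection.
Hypothesis complete : complete_ip ip.
Variable N : V -> Prop.
Hypothesis closedN : closed_subspace ip N.

Lemma exists_min_dist x :
  exists2 p, N p & forall y, N y -> vnorm2 (x - p) <= vnorm2 (x - y).
Proof.
have [subN limN] := closedN.
pose E : set R := fun r => exists2 y, N y & r = vnorm2 (x - y).
have E_inf : has_inf E.
  split; first by exists (vnorm2 (x - 0)), 0; first exact: subN.1.
  by exists 0 => _ [y _ ->]; exact: vnorm2_ge0.
have inf_le y : N y -> inf E <= vnorm2 (x - y).
  by move=> Ny; apply: (ge_inf E_inf.2); exists y.
have inf_ge0 : 0 <= inf E.
  by apply: lb_le_inf E_inf.1 _ => _ [y _ ->]; exact: vnorm2_ge0.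
have /choice[g gE] : forall k, exists y, N y /\ vnorm2 (x - y) < inf E + (k.+1%:R)^-1.
  move=> k; have ek : 0 < (k.+1%:R : R)^-1 by rewrite invr_gt0.
  have [_ [y Ny ->]] := inf_adherent ek E_inf.
  by exists y.
have [p gp] := complete g (minimizing_seq_cauchy subN inf_le (fun k => (gE k).1)
  (fun k => (gE k).2)).
exists p; first by apply: (limN g) => // k; exact: (gE k).1.
move=> y Ny; apply: le_trans (inf_le _ Ny).
exact: vnorm2_le_of_cvg inf_ge0 gp (fun k => (gE k).2).
Qed.

Lemma proj_spec x :
  N (proj ip N x) /\ forall y, N y -> ip (x - proj ip N x) y = 0.
Proof.
apply: proj_spec_ex; have [p Np p_min] := exists_min_dist x.
by exists p; split=> //; apply: min_dist_orthogonal closedN.1 _ _ Np p_min.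
Qed.

Lemma proj_mem x : N (proj ip N x).
Proof. exact: (proj_spec x).1. Qed.

Lemma proj_min x y : N y -> vnorm2 (x - proj ip N x) <= vnorm2 (x - y).
Proof.
move=> Ny; have [Np x_orth] := proj_spec x.
have -> : x - y = (x - proj ip N x) + (proj ip N x - y) by rewrite addrA subrK.
have Npy : N (proj ip N x - y) := subspaceB closedN.1 Np Ny.
by rewrite (vnorm2D (x - _)) x_orth //= mulr0 addr0 lerDl vnorm2_ge0.
Qed.

Lemma vnorm2_sub_proj x : (vnorm2 (x - proj ip N x))%:C = ip x x - ip (proj ip N x) x.
Proof.
have [Np x_orth] := proj_spec x.
by rewrite -ipxx [ip (x - _) (x - _)]ipBr (x_orth _ Np) subr0 ipBl.
Qed.

End Projection.

Arguments proj_mem complete {N} closedN x.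
Arguments proj_min complete {N} closedN {x y}.
Arguments vnorm2_sub_proj complete {N} closedN x.

Lemma proj_id {N x} : subspace N -> N x -> proj ip N x = x.
Proof.
move=> subN Nx.
have [Np x_orth] : N (proj ip N x) /\ forall y, N y -> ip (x - proj ip N x) y = 0.
  by apply: proj_spec_ex; exists x; split=> // y _; rewrite subrr ip0l.
by apply/esym/subr0_eq/(ip_eq0 (i:=ip))/x_orth/(subspaceB subN).
Qed.

Lemma mul_lt_of_lt_div_add1 (a b r : R) : 0 <= a -> 0 < r -> b < r / (a + 1) -> a * b < r.
Proof.
move=> a0 r0 br; have a1 : 0 < a + 1 by rewrite ltr_wpDl.
apply: le_lt_trans (ler_wpM2l a0 (ltW br)) _.
by rewrite mulrA ltr_pdivrMr // mulrDr mulr1 mulrC ltrDl.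
Qed.

Lemma sot_conv_wot (A : nat -> V -> V) (B : V -> V) : sot_conv ip A B -> wot_conv ip A B.
Proof.
move=> AB x y; apply/sconvR => r r0.
have ry : 0 < r / (vnorm y + 1) by rewrite divr_gt0 // ltr_wpDl ?vnorm_ge0.
have [K HK] := (hconvR _ _).1 (AB x) _ ry.
exists K => n /HK Anx; rewrite -ipBl; apply: le_lt_trans (cauchy_schwarz _ _) _.
by rewrite mulrC mul_lt_of_lt_div_add1 ?vnorm_ge0.
Qed.

Section DistLimit.
Variable Ms : nat -> V -> Prop.
Hypothesis subMs : forall n, subspace (Ms n).
Local Notation L := (dist_to0 ip Ms).

Lemma dist_to0_0 : L 0.
Proof.
apply/dist_to0R => r r0; exists 0%N => n _.
by exists 0; rewrite subrr vnorm0; split=> //; exact: (subMs n).1.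
Qed.

Lemma dist_to0D f g : L f -> L g -> L (f + g).
Proof.
move=> /dist_to0R Lf /dist_to0R Lg; apply/dist_to0R => r r0.
have r2 : 0 < r / 2 by rewrite divr_gt0.
have [[N1 H1] [N2 H2]] := (Lf _ r2, Lg _ r2).
exists (maxn N1 N2) => n; rewrite geq_max => /andP[/H1[f' [Mf' ff']] /H2[g' [Mg' gg']]].
exists (f' + g'); split; first exact: subspaceD.
rewrite opprD addrACA; apply: le_lt_trans (vnormD _ _) _.
by rewrite [r]splitr ltrD.
Qed.

Lemma dist_to0Z a f : L f -> L (a *: f).
Proof.
move=> /dist_to0R Lf; apply/dist_to0R => r r0.
have ra : 0 < r / (normc a + 1) by rewrite divr_gt0 // ltr_wpDl ?normc_ge0.
have [N HN] := Lf _ ra; exists N => n /HN[f' [Mf' ff']].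
exists (a *: f'); split; first exact: subspaceZ.
by rewrite -scalerBr vnormZ mul_lt_of_lt_div_add1 ?normc_ge0.
Qed.

Lemma dist_to0_lim u l : (forall k, L (u k)) -> hconv ip u l -> L l.
Proof.
move=> Lu /hconvR ul; apply/dist_to0R => r r0.
have r2 : 0 < r / 2 by rewrite divr_gt0.
have [K HK] := ul _ r2; have [N HN] := (dist_to0R _ _).1 (Lu K) _ r2.
exists N => n /HN[g [Msg ug]]; exists g; split=> //.
have := vnormD (l - u K) (u K - g); rewrite addrA subrK (vnormB l (u K)).
by have := HK K (leqnn K); lra.
Qed.

Lemma closed_subspace_dist_to0 : closed_subspace ip L.
Proof.
split; last exact: dist_to0_lim.
split; first exact: dist_to0_0.
by move=> a f g Lf Lg; apply/dist_to0D/Lg/dist_to0Z.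
Qed.

End DistLimit.

Section ProjectionConvergence.
Hypothesis complete : complete_ip ip.
Variable Ms : nat -> V -> Prop.
Hypothesis closedMs : forall n, closed_subspace ip (Ms n).
Local Notation L := (dist_to0 ip Ms).

Lemma sot_proj_conv_iff {N} : closed_subspace ip N ->
  sot_conv ip (fun n x => proj ip (Ms n) (proj ip N x)) (proj ip N) <->
  forall f, N f -> L f.
Proof.
move=> closedN; split=> [PN f Nf | NL x].
  have /hconvR Pf := PN f; rewrite (proj_id closedN.1 Nf) in Pf.
  apply/dist_to0R => r /Pf[K HK]; exists K => n Kn.
  by exists (proj ip (Ms n) f); rewrite vnormB; split; [exact: proj_mem | exact: HK].
apply/hconvR => r /((dist_to0R _ _).1 (NL _ (proj_mem complete closedN x)))[K HK].
exists K => n /HK[g [Msg gr]]; apply: le_lt_trans gr.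
by rewrite vnormB -ler_sqr ?nnegrE ?vnorm_ge0 // !sqr_vnorm proj_min.
Qed.

Lemma wot_proj_conv_iff {N} : closed_subspace ip N ->
  wot_conv ip (fun n x => proj ip (Ms n) (proj ip N x)) (proj ip N) <->
  forall f, N f -> L f.
Proof.
move=> closedN; split=> [PN f Nf | /(sot_proj_conv_iff closedN)/sot_conv_wot //].
have /sconvR Pf := PN f f; rewrite (proj_id closedN.1 Nf) in Pf.
apply/dist_to0R => r r0; have [K HK] := Pf _ (mulr_gt0 r0 r0).
exists K => n /HK Pfn; exists (proj ip (Ms n) f); split; first exact: proj_mem.
move: Pfn; rewrite -opprB -vnorm2_sub_proj // normcN normc_real ger0_norm ?vnorm2_ge0 //.
by rewrite -sqr_vnorm -expr2 ltr_sqr ?nnegrE ?vnorm_ge0 ?ltW.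
Qed.

End ProjectionConvergence.

Lemma subspace_lim_maximal {Ms M} {Conv : (V -> Prop) -> Prop} :
  closed_subspace ip (dist_to0 ip Ms) -> closed_subspace ip M ->
  (forall N, closed_subspace ip N -> Conv N <-> forall f, N f -> dist_to0 ip Ms f) ->
  subspace_lim ip Ms M <->
  Conv M /\ ~ exists N, closed_subspace ip N /\ strict_sub M N /\ Conv N.
Proof.
move=> closedL closedM ConvE; split=> [ML | [CM no_larger] f].
  split=> [|[N [closedN [[_ [x [Nx notMx]]] CN]]]]; first by apply/ConvE => // f /ML.
  by apply/notMx/ML; exact: (ConvE N closedN).1 CN x Nx.
split=> [|Lf]; first exact: (ConvE M closedM).1 CM f.
apply: contrapT => notMf; apply: no_larger; exists (dist_to0 ip Ms).
split=> //; split; last exact/ConvE.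
by split; [exact: (ConvE M closedM).1 CM | exists f].
Qed.

End InnerProductSpace.

Theorem proposition4p1 (R : realType) (V : lmodType (R[i])%C)
  (ip : inner_product V) (Hcomplete : complete_ip ip)
  (Ms : nat -> V -> Prop) (M : V -> Prop)
  (HMs : forall n, closed_subspace ip (Ms n)) (HM : closed_subspace ip M) :
  (subspace_lim ip Ms M <->
     (sot_conv ip (fun n x => proj ip (Ms n) (proj ip M x)) (proj ip M) /\
      ~ exists N, closed_subspace ip N /\ strict_sub M N /\
        sot_conv ip (fun n x => proj ip (Ms n) (proj ip N x)) (proj ip N)))
  /\
  (subspace_lim ip Ms M <->
     (wot_conv ip (fun n x => proj ip (Ms n) (proj ip M x)) (proj ip M) /\
      ~ exists N, closed_subspace ip N /\ strict_sub M N /\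
        wot_conv ip (fun n x => proj ip (Ms n) (proj ip N x)) (proj ip N))).
Proof.
have closedL : closed_subspace ip (dist_to0 ip Ms).
  by apply: closed_subspace_dist_to0 => n; exact: (HMs n).1.
split; apply: subspace_lim_maximal closedL HM _ => N closedN.
- exact: sot_proj_conv_iff.
- exact: wot_proj_conv_iff.
Qed.
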